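(* If $s\ge3$ and $s$ is odd, then $\mathrm{ex}(n,P^{(3)}_s)\ge\left(1-\frac{4}{(s-1)^2}+o(1)\right)\binom{n}{3}$, where $o(1)\to0$ as $n\to\infty$ with $s$ fixed.
   Context: An ordered $3$-uniform hypergraph is a $3$-uniform hypergraph with linearly ordered vertex set; $G$ contains $H$ if there is an order-preserving injection $f:V(H)\to V(G)$ with $f(e)\in E(G)$ for all $e\in E(H)$. $\mathrm{ex}(n,H)$ is the maximum number of edges of an $n$-vertex ordered $3$-uniform hypergraph not containing $H$. $P^{(3)}_s$ has vertices $v_1<\dots<v_s$ and edges $\{v_j,v_{j+1},v_{j+2}\}$ for $1\le j\le s-2$. *)

From mathcomp Require Import all_boot all_order all_algebra.
Set Implicit Arguments. Unset Strict Implicit. Unset Printing Implicit Defensive.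
Import Order.TTheory GRing.Theory Num.Theory.

Definition uniform3 (n : nat) (G : {set {set 'I_n}}) : bool :=
  [forall e in G, #|e| == 3].

(* G contains H: an order-preserving injection f : V(H) -> V(G)
   (i.e. strictly increasing map) sending every edge of H to an edge of G. *)
Definition contains (n m : nat) (G : {set {set 'I_n}}) (H : {set {set 'I_m}}) : bool :=
  [exists f : {ffun 'I_m -> 'I_n},
     [forall i : 'I_m, forall j : 'I_m, (i < j)%N ==> (f i < f j)%N] &&
     [forall e in H, (f @: e) \in G]].

Definition ex (n m : nat) (H : {set {set 'I_m}}) : nat :=
  \max_(G : {set {set 'I_n}} | uniform3 G && ~~ contains G H) #|G|.

(* The tight path P^(3)_s: vertices v_1 < ... < v_s (here 0 < ... < s-1),
   edges {v_j, v_{j+1}, v_{j+2}}. *)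
Definition tight_path (s : nat) : {set {set 'I_s}} :=
  [set e : {set 'I_s} | [exists j : 'I_s, ((j.+2 < s)%N) &&
      (e == [set i : 'I_s | (j <= i <= j.+2)%N])]].

(** Split the vertices [0 < ... < n-1] into [k] consecutive intervals and keep
    every triple that meets at least two of them.  Along a tight path
    [v_0 < ... < v_(2k)] in this hypergraph the interval index strictly
    increases from [v_(2t)] to [v_(2t+2)], since the edge [{v_(2t), v_(2t+1), v_(2t+2)}]
    is not inside a single interval; so [v_(2k)] would need an interval of index
    [k], and there is none.  With intervals of size about [n/k] at most a
    fraction [1/k^2] of all triples is lost, and [s = 2k+1].  No error term is
    needed: the bound holds for every [n]. *)

From mathcomp Require Import all_boot all_order all_algebra.
From mathcomp Require Import zify ring lra.
Import Order.TTheory GRing.Theory Num.Theory.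

Set Implicit Arguments.
Unset Strict Implicit.
Unset Printing Implicit Defensive.

Lemma bin3_mul6 x : 'C(x, 3) * 6 = x * x.-1 * x.-2.
Proof. by rewrite -[6]/(3`!) bin_ffact !ffactnS ffactn0 muln1 mulnA. Qed.

Lemma sum_bin3_le (I : finType) (a : I -> nat) q :
  (forall i, a i <= q.+1) -> (\sum_i 'C(a i, 3)) * 6 <= (\sum_i a i) * (q * q.-1).
Proof.
move=> a_le; rewrite !big_distrl /=; apply: leq_sum => i _.
rewrite bin3_mul6 -mulnA leq_mul2l; have := a_le i.
by case: (a i) => [|[|x]] //= le_xq; apply: leq_mul; lia.
Qed.

Lemma leq_card_bigcup (I T : finType) (F : I -> {set T}) :
  #|\bigcup_i F i| <= \sum_i #|F i|.
Proof.
elim/big_ind2: _ => [|m A p B le_A le_B|//]; first by rewrite cards0.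
exact: leq_trans (leq_card_setU A B) (leq_add le_A le_B).
Qed.

Section CrossingTriples.

Variables (n k : nat) (blk : 'I_n -> 'I_k).

Definition block (b : 'I_k) : {set 'I_n} := [set i | blk i == b].

Definition crossing_triples : {set {set 'I_n}} :=
  [set e : {set 'I_n} | (#|e| == 3) && [forall b, ~~ (e \subset block b)]].

Lemma uniform3_crossing_triples : uniform3 crossing_triples.
Proof. by apply/forall_inP => e; rewrite inE => /andP[]. Qed.

Lemma sum_card_block : \sum_b #|block b| = n.
Proof.
rewrite -[RHS]card_ord -sum1_card (partition_big blk xpredT) //=.
by apply: eq_bigr => b _; rewrite -sum1_card; apply: eq_bigl => i; rewrite inE.
Qed.

Lemma card_crossing_triples :
  'C(n, 3) <= #|crossing_triples| + \sum_b 'C(#|block b|, 3).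
Proof.
rewrite -[n in 'C(n, 3)]card_ord -card_draws.
under eq_bigr do rewrite -cards_draws.
apply: leq_trans (leq_add (leqnn _) (leq_card_bigcup _)).
apply: leq_trans (leq_card_setU _ _); apply: subset_leq_card.
apply/subsetP => e; rewrite !inE => e3; rewrite e3 /=.
case: (boolP [forall b, _]) => [//|/forallPn[b /negPn e_b]].
by apply/bigcupP; exists b; rewrite // inE e_b.
Qed.

Hypothesis blk_homo : {homo blk : i j / (i <= j)%N}.

Lemma crossing_triples_tight_path_free :
  ~~ contains crossing_triples (tight_path k.*2.+1).
Proof.
set s := k.*2.+1.
apply/existsP => -[f /andP[/forallP f_incr /forall_inP f_edge]].
have f_homo : {homo f : i j / (i <= j)%N}.
  move=> i j; rewrite leq_eqVlt => /orP[/eqP/val_inj-> //|lt_ij].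
  by apply: ltnW; apply: (implyP (forallP (f_incr i) j)).
have blk_step (j : 'I_s) : j.+2 < s -> blk (f j) < blk (f (inord j.+2)).
  move=> j2s; set e := [set i : 'I_s | j <= i <= j.+2].
  have e_path : e \in tight_path s by rewrite inE; apply/existsP; exists j; rewrite j2s eqxx.
  have := f_edge e e_path; rewrite inE => /andP[_ /forallP/(_ (blk (f j)))].
  rewrite ltnNge; apply: contra => blk_le; apply/subsetP => x /imsetP[i].
  rewrite !inE => /andP[le_ji le_ij2] ->{x}; apply/eqP/val_inj/eqP; rewrite eqn_leq.
  apply/andP; split; last exact/blk_homo/f_homo.
  by apply: leq_trans blk_le; apply/blk_homo/f_homo; rewrite inordK.
have blk_even t : t.*2 < s -> t <= blk (f (inord t.*2)).
  elim: t => [//|t IHt]; rewrite doubleS => t2s.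
  have t2s' : t.*2 < s by lia.
  have := blk_step (inord t.*2); rewrite inordK // => /(_ t2s).
  exact: leq_ltn_trans (IHt t2s').
by have := blk_even k (ltnSn _); rewrite leqNgt ltn_ord.
Qed.

End CrossingTriples.

Section IntervalBlocks.

Variables n k : nat.

Let q := n.-1 %/ k.+1.

Lemma interval_index_lt (i : 'I_n) : i %/ q.+1 < k.+1.
Proof.
have := ltn_ord i; have := divn_eq n.-1 k.+1; have := ltn_pmod n.-1 (ltn0Sn k).
rewrite -/q ltn_divLR //; nia.
Qed.

Definition interval_block (i : 'I_n) : 'I_k.+1 := inord (i %/ q.+1).

Lemma interval_blockE i : interval_block i = i %/ q.+1 :> nat.
Proof. by rewrite inordK ?interval_index_lt. Qed.

Lemma interval_block_homo : {homo interval_block : i j / (i <= j)%N}.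
Proof. by move=> i j le_ij; rewrite !interval_blockE leq_div2r. Qed.

Lemma card_interval_block_le b : #|block interval_block b| <= q.+1.
Proof.
pose r (i : 'I_n) : 'I_q.+1 := Ordinal (ltn_pmod i (ltn0Sn q)).
rewrite -(card_in_imset (f := r)); first by rewrite -[X in _ <= X](card_ord q.+1) max_card.
move=> i j; rewrite !inE => /eqP bi /eqP bj /(congr1 val) /= eq_mod.
apply: val_inj; rewrite /= (divn_eq i q.+1) (divn_eq j q.+1) eq_mod.
by rewrite -!interval_blockE bi bj.
Qed.

Lemma interval_blocks_bin3_sum :
  (\sum_b 'C(#|block interval_block b|, 3)) * k.+1 ^ 2 <= 'C(n, 3).
Proof.
have le_kq : k.+1 * q <= n.-1 by rewrite (divn_eq n.-1 k.+1) -/q mulnC leq_addr.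
have le_kq1 : k.+1 * q.-1 <= n.-2 by rewrite mulnC -subn1 mulnBl mulnC; lia.
rewrite -(leq_pmul2r (isT : 0 < 6)) mulnAC bin3_mul6.
have := sum_bin3_le card_interval_block_le; rewrite sum_card_block => le_sum.
apply: leq_trans (leq_mul (leq_mul (leqnn n) le_kq) le_kq1).
have -> : n * (k.+1 * q) * (k.+1 * q.-1) = n * (q * q.-1) * k.+1 ^ 2 by ring.
by rewrite leq_mul2r le_sum orbT.
Qed.

End IntervalBlocks.

Lemma ex_tight_path_odd_ge n k :
  k.+1 ^ 2 * 'C(n, 3) <= k.+1 ^ 2 * ex n (tight_path (k.+1).*2.+1) + 'C(n, 3).
Proof.
pose blk := @interval_block n k; set G := crossing_triples blk.
have G_le_ex : #|G| <= ex n (tight_path (k.+1).*2.+1).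
  apply: leq_bigmax_cond; rewrite uniform3_crossing_triples /=.
  exact/crossing_triples_tight_path_free/interval_block_homo.
apply: (@leq_trans (k.+1 ^ 2 * #|G| + 'C(n, 3))); last first.
  by rewrite leq_add2r leq_mul2l G_le_ex orbT.
apply: leq_trans (leq_mul (leqnn _) (card_crossing_triples blk)) _.
by rewrite mulnDr leq_add2l mulnC interval_blocks_bin3_sum.
Qed.

Local Open Scope ring_scope.

Theorem corollary4p3 (s : nat) :
  (3 <= s)%N -> odd s ->
  forall eps : rat, 0 < eps ->
  exists N : nat, forall n : nat, (N <= n)%N ->
    (1 - 4 / ((s.-1)%:R ^+ 2) - eps) * ('C(n, 3))%:R <= (ex n (tight_path s))%:R.
Proof.
move=> s_ge3 s_odd eps eps_gt0.
have [k ->] : exists k, s = (k.+1).*2.+1.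
  by exists (s./2).-1; have := odd_double_half s; rewrite s_odd /=; lia.
exists 0%N => n _; have := ex_tight_path_odd_ge n k.
rewrite /= -!mul2n -(ler_nat rat) natrD !natrM.
set K : rat := k.+1%:R; set C : rat := 'C(n, 3)%:R.
have K_gt0 : 0 < K * K by rewrite mulr_gt0 ?ltr0n.
have -> : 4 / (2%:R * K) ^+ 2 = (K * K)^-1.
  by field; rewrite nat1r pnatr_eq0.
move=> le_KC; have C_ge0 : 0 <= C by rewrite ler0n.
apply: (@le_trans _ _ ((1 - (K * K)^-1) * C)).
  by rewrite ler_wpM2r // lerBlDr lerDl ltW.
rewrite -(ler_pM2l K_gt0) mulrA mulrBr mulr1 mulrV ?unitfE ?lt0r_neq0 //.
lra.
Qed.
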